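(* Let $\Lambda=\{(\lambda_1,\lambda_2):1\le\lambda_1<\lambda_2\le n\}$ and $V$ the set of functions $v:\Lambda\to\mathbb Z$. Let $H=\bigoplus_{\sigma\in S_n}H_\sigma$ with $H_\sigma=\ell^2(\mathbb Z)^{\otimes\Lambda}$, the tensor factors labelled by $\lambda\in\Lambda$, with standard basis $\{e^\lambda_{\sigma,m}:m\in\mathbb Z\}$ in the factor labelled $\lambda$, and put $\varepsilon_{\sigma,v}=\bigotimes_{\lambda\in\Lambda}e^\lambda_{\sigma,v(\lambda)}$ (an orthonormal basis of $H$ as $\sigma\in S_n$, $v\in V$ vary). For $i,k\in\{1,\dots,n\}$ let $U_{ik}$ be the bounded operator on $H$ with $U_{ik}\varepsilon_{\sigma,v}=\bigotimes_\lambda U_{ik}^\lambda e^\lambda_{\sigma,v(\lambda)}$ if $\sigma(k)=i$ and $U_{ik}\varepsilon_{\sigma,v}=0$ if $\sigma(k)\neq i$, where $U_{ik}^\lambda e^\lambda_{\sigma,m}=e^\lambda_{\sigma,m}$ if $k\notin\{\lambda_1,\lambda_2\}$, $U_{ik}^\lambda e^\lambda_{\sigma,m}=(\overline{\omega_{i,\sigma(\lambda_2)}}\,\omega_{k,\lambda_2})^me^\lambda_{\sigma,m}$ if $k=\lambda_1$, and $U_{ik}^\lambda e^\lambda_{\sigma,m}=e^\lambda_{\sigma,m+1}$ if $k=\lambda_2$. Then the operators $U_{ik}$ satisfy, for all $i,j,k,l$: $U_{ik}U_{jl}+\omega_{ji}U_{jk}U_{il}=\omega_{kl}U_{il}U_{jk}+\omega_{ji}\omega_{kl}U_{jl}U_{ik}$;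 $\sum_iU_{ik}U_{il}^*=\delta_{kl}1$; $\sum_iU_{il}^*U_{ik}=\delta_{kl}1$; $U_{jk}U_{ik}^*=0$ and $U_{ik}^*U_{jk}=0$ for $i\neq j$.
   Context: $n\ge2$, $\theta=(\theta_{ij})\in M_n(\mathbb R)$ skew-symmetric, $\omega_{ij}=e^{2\pi i\theta_{ij}}$; $S_n$ is the symmetric group on $\{1,\dots,n\}$. *)

From HB Require Import structures.
From mathcomp Require Import all_boot all_order all_algebra all_fingroup.
From mathcomp Require Import complex.
From mathcomp Require Import boolp reals trigo.
Set Implicit Arguments. Unset Strict Implicit. Unset Printing Implicit Defensive.
Import Order.TTheory GRing.Theory Num.Theory.
Local Open Scope ring_scope.
Local Open Scope complex_scope.

(* Index set Lambda = {(l1,l2) : 1 <= l1 < l2 <= n}, with 0-based indices 'I_n. *)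
Definition Lam (n : nat) := {p : 'I_n * 'I_n | (p.1 < p.2)%N}.

Definition Vn (n : nat) := Lam n -> int.

(* Indices of the orthonormal basis eps_{sigma,v} of H = (+)_sigma H_sigma. *)
Definition Idx (n : nat) := ('S_n * Vn n)%type.

(* A vector of H is represented by its coefficient family w.r.t. the basis
   eps_{sigma,v}; we allow arbitrary families (l^2 sits inside). *)
Definition vec (R : realType) (n : nat) := Idx n -> R[i].

Definition expi (R : realType) (x : R) : R[i] := cos x +i* sin x.
Definition omega (R : realType) (n : nat) (theta : 'M[R]_n) (i j : 'I_n) : R[i] :=
  expi (2 * pi * theta i j).

Definition eps (R : realType) (n : nat) (x : Idx n) : vec R n :=
  fun y => if pselect (y = x) then 1 else 0.

(* v + s * [lambda_2 = k] : the shift performed by U_ik (by s = 1). *)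
Definition vshift (n : nat) (k : 'I_n) (v : Vn n) (s : int) : Vn n :=
  fun l => v l + s * ((sval l).2 == k)%:R.

(* scalar by which U_ik multiplies eps_{sigma,v} (when sigma k = i):
   the product over lambda of the factors of U^lambda_ik. *)
Definition Ucoef (R : realType) (n : nat) (theta : 'M[R]_n) (i k : 'I_n)
    (sigma : 'S_n) (v : Vn n) : R[i] :=
  \prod_(l : Lam n)
     (if (sval l).1 == k then
        ((omega theta i (sigma (sval l).2))^* * omega theta k (sval l).2) ^ (v l)
      else 1).

(* U_ik eps_{sigma,v} = [sigma k = i] Ucoef * eps_{sigma, vshift k v 1},
   written on coefficient families. *)
Definition Uop (R : realType) (n : nat) (theta : 'M[R]_n) (i k : 'I_n)
    (f : vec R n) : vec R n :=
  fun x => let: (sigma, w) := x in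
    if sigma k == i then
      Ucoef theta i k sigma (vshift k w (-1)) * f (sigma, vshift k w (-1))
    else 0.

Definition Ustar (R : realType) (n : nat) (theta : 'M[R]_n) (i k : 'I_n)
    (g : vec R n) : vec R n :=
  fun x => let: (sigma, v) := x in
    if sigma k == i then (Ucoef theta i k sigma v)^* * g (sigma, vshift k v 1)
    else 0.

Definition kron (R : realType) (n : nat) (k l : 'I_n) : R[i] := (k == l)%:R.

From HB Require Import structures.
From mathcomp Require Import all_boot all_order all_algebra all_fingroup.
From mathcomp Require Import complex.
From mathcomp Require Import boolp reals trigo.
Import Order.TTheory GRing.Theory Num.Theory.
Local Open Scope ring_scope.
Local Open Scope complex_scope.

(* U_ik is a weighted shift: when sigma(k) = i it sends eps_{sigma,v} to
   c eps_{sigma,v+e_k}, where e_k is the indicator of {lambda | lambda_2 = k}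
   and |c| = 1, and otherwise it kills eps_{sigma,v}.  So U_ik U_jl vanishes
   on eps_{sigma,v} unless i = sigma(k) and j = sigma(l), and then it differs
   from U_jl U_ik only by the phase of the single tensor factor
   lambda = (min(k,l), max(k,l)), which sees the shift in the other slot.
   Skew-symmetry of theta (conj omega_ab = omega_ba and omega_ab omega_ba = 1)
   turns this phase into the factor omega_ji omega_kl of the relation.  The
   remaining relations reduce to c conj(c) = 1 and to the fact that sigma(k)
   cannot be both i and j. *)

Lemma normrXz_eq1 (F : numFieldType) (z : F) (m : int) :
  `|z| = 1 -> `|z ^ m| = 1.
Proof.
by move=> z1; case: m => m; rewrite ?NegzE -?exprnN ?normfV normrX z1 expr1n ?invr1.
Qed.

Section Expi.
Variable R : realType.

(* In [complex_scope], [^*] is [conjc], whereas the definitions use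
   [Num.conj], written [^*%R] below. *)
Lemma conjcE (z : R[i]) : z^* = Num.conj z.
Proof. by []. Qed.

Lemma expi0 : expi (0 : R) = 1.
Proof. by rewrite /expi cos0 sin0. Qed.

Lemma expiD (a b : R) : expi (a + b) = expi a * expi b.
Proof. by rewrite /expi cosD sinD; simpc; rewrite [sin a * cos b + _]addrC. Qed.

Lemma conj_expi (a : R) : (expi a)^*%R = expi (- a).
Proof. by rewrite /expi cosN sinN. Qed.

Lemma norm_expi (a : R) : `|expi a| = 1.
Proof.
by apply/eqP; rewrite -sqrp_eq1 // normCK conj_expi -expiD subrr expi0.
Qed.

End Expi.

Section WeightedShifts.
Variables (R : realType) (n : nat) (theta : 'M[R]_n).

Lemma norm_omega (a b : 'I_n) : `|omega theta a b| = 1.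
Proof. exact: norm_expi. Qed.

Lemma norm_Ucoef (i k : 'I_n) (s : 'S_n) (v : Vn n) :
  `|Ucoef theta i k s v| = 1.
Proof.
rewrite normr_prod big1 // => lam _; case: ifP => _; last exact: normr1.
by rewrite normrXz_eq1 // normrM norm_conjC !norm_omega mulr1.
Qed.

Lemma Ucoef_conjK (i k : 'I_n) (s : 'S_n) (v : Vn n) :
  Ucoef theta i k s v * (Ucoef theta i k s v)^*%R = 1.
Proof. by rewrite -normCK norm_Ucoef expr1n. Qed.

Lemma prod_Lam_pair (k l : 'I_n) (c : R[i]) :
  \prod_(lam : Lam n) (if ((sval lam).1 == k) && ((sval lam).2 == l) then c else 1)
  = if (k < l)%N then c else 1.
Proof.
case: ltnP => [kl|lk].
  rewrite (bigD1 (exist _ (k, l) kl)) //= !eqxx big1 ?mulr1 // => lam.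
  rewrite -(inj_eq val_inj) /=; case: andP => // -[/eqP <- /eqP <-].
  by rewrite -surjective_pairing eqxx.
apply: big1 => -[[a b] ab] _ /=; case: andP => // -[/eqP ea /eqP eb].
by move: ab; rewrite ea eb ltnNge lk.
Qed.

Lemma Ucoef_vshift (i k l : 'I_n) (s : 'S_n) (v : Vn n) (z : int) :
  Ucoef theta i k s (vshift l v z) = Ucoef theta i k s v *
    (if (k < l)%N then ((omega theta i (s l))^*%R * omega theta k l) ^ z else 1).
Proof.
rewrite -prod_Lam_pair -big_split /=; apply: eq_bigr => lam _.
rewrite /vshift; case: ((sval lam).1 == k) => /=; last by rewrite mulr1.
have base_unit : (omega theta i (s (sval lam).2))^*%R * omega theta k (sval lam).2
                 \is a GRing.unit.
  by rewrite unitfE -normr_eq0 normrM norm_conjC !norm_omega mulr1 oner_eq0.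
rewrite exprzDr //; have [->|_] := eqVneq (sval lam).2 l; first by rewrite mulr1.
by rewrite mulr0 expr0z !mulr1.
Qed.

Lemma Ucoef_vshift_diag (i k : 'I_n) (s : 'S_n) (v : Vn n) (z : int) :
  Ucoef theta i k s (vshift k v z) = Ucoef theta i k s v.
Proof. by rewrite Ucoef_vshift ltnn mulr1. Qed.

Lemma vshiftK (k : 'I_n) (z : int) : cancel (vshift k ^~ z) (vshift k ^~ (- z)).
Proof. by move=> v; apply: funext => lam; rewrite /vshift mulNr addrK. Qed.

Lemma vshiftNK (k : 'I_n) (z : int) : cancel (vshift k ^~ (- z)) (vshift k ^~ z).
Proof. by move=> v; rewrite -[X in vshift _ _ X]opprK vshiftK. Qed.

Lemma vshiftC (k l : 'I_n) (v : Vn n) (y z : int) :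
  vshift k (vshift l v y) z = vshift l (vshift k v z) y.
Proof. by apply: funext => lam; rewrite /vshift addrAC. Qed.

Lemma eps_vshift (sigma s : 'S_n) (k : 'I_n) (v w : Vn n) (z : int) :
  eps R (sigma, vshift k v z) (s, w) = eps R (sigma, v) (s, vshift k w (- z)).
Proof.
rewrite /eps; suff -> : ((s, w) = (sigma, vshift k v z))
                       = ((s, vshift k w (- z)) = (sigma, v)) by [].
by apply: propext; split=> [[-> ->]|[-> <-]]; rewrite ?vshiftK ?vshiftNK.
Qed.

Lemma Uop_eps (i k : 'I_n) (sigma : 'S_n) (v : Vn n) :
  Uop theta i k (eps R (sigma, v)) =
  if sigma k == i then
    (fun y => Ucoef theta i k sigma v * eps R (sigma, vshift k v 1) y)
  else (fun _ => 0).
Proof.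
apply: funext => -[s w] /=; rewrite (fun_if (fun f => f (s, w))) /= eps_vshift.
rewrite /eps; case: (pselect (_ = _)) => [e|_] /=; first by case: e => -> ->.
by rewrite !mulr0 !if_same.
Qed.

Lemma eps_sym (x y : Idx n) : eps R x y = eps R y x.
Proof.
by rewrite /eps; have -> : (y = x) = (x = y) by apply: propext; split=> ->.
Qed.

Lemma Uop_eps_adjoint (i k : 'I_n) (x y : Idx n) :
  Uop theta i k (eps R x) y = (Ustar theta i k (eps R y) x)^*.
Proof.
case: x y => [s1 v1] [s2 w2] /=; rewrite [eps R (s2, w2) _]eps_sym eps_vshift /eps.
case: (pselect (_ = _)) => [e|_] /=; last by rewrite !mulr0 !if_same conjc0.
case: e => -> ->; case: ifP => _; last by rewrite conjc0.
by rewrite !mulr1 conjcE conjCK.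
Qed.

Lemma sum_Uop (k : 'I_n) (g : 'I_n -> vec R n) (s : 'S_n) (w : Vn n) :
  \sum_(i < n) Uop theta i k (g i) (s, w) = Uop theta (s k) k (g (s k)) (s, w).
Proof.
rewrite (bigD1 (s k)) //= big1 ?addr0 // => i.
by rewrite eq_sym => /negbTE ->.
Qed.

Lemma sum_Ustar (k : 'I_n) (g : 'I_n -> vec R n) (s : 'S_n) (w : Vn n) :
  \sum_(i < n) Ustar theta i k (g i) (s, w) = Ustar theta (s k) k (g (s k)) (s, w).
Proof.
rewrite (bigD1 (s k)) //= big1 ?addr0 // => i.
by rewrite eq_sym => /negbTE ->.
Qed.

Lemma sum_Uop_Ustar (k l : 'I_n) (f : vec R n) (x : Idx n) :
  \sum_(i < n) Uop theta i k (Ustar theta i l f) x = kron R k l * f x.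
Proof.
case: x => s w; rewrite sum_Uop /= eqxx /kron.
have [<-|kl] := eqVneq k l.
  by rewrite eqxx vshiftNK mulrA Ucoef_conjK mul1r.
by rewrite (inj_eq perm_inj) eq_sym (negbTE kl) mulr0 mul0r.
Qed.

Lemma sum_Ustar_Uop (k l : 'I_n) (f : vec R n) (x : Idx n) :
  \sum_(i < n) Ustar theta i l (Uop theta i k f) x = kron R k l * f x.
Proof.
case: x => s v; rewrite sum_Ustar /= eqxx /kron.
have [<-|kl] := eqVneq k l.
  by rewrite eqxx vshiftK mulrA [X in X * _]mulrC Ucoef_conjK mul1r.
by rewrite (inj_eq perm_inj) (negbTE kl) mulr0 mul0r.
Qed.

Lemma Uop_Ustar_eq0 (i j k : 'I_n) (f : vec R n) (x : Idx n) :
  i != j -> Uop theta j k (Ustar theta i k f) x = 0.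
Proof.
case: x => s w ij /=; case: eqP => // ->.
by rewrite eq_sym (negbTE ij) mulr0.
Qed.

Lemma Ustar_Uop_eq0 (i j k : 'I_n) (f : vec R n) (x : Idx n) :
  i != j -> Ustar theta i k (Uop theta j k f) x = 0.
Proof.
case: x => s w ij /=; case: eqP => // ->.
by rewrite (negbTE ij) mulr0.
Qed.

Hypothesis theta_skew : theta^T = - theta.

Lemma thetaN (a b : 'I_n) : theta b a = - theta a b.
Proof. by have /matrixP/(_ a b) := theta_skew; rewrite !mxE. Qed.

Lemma omega_diag (a : 'I_n) : omega theta a a = 1.
Proof.
rewrite /omega; have /eqP := thetaN a a; rewrite eq_sym eqNr => /eqP ->.
by rewrite mulr0 expi0.
Qed.

Lemma omega_conj (a b : 'I_n) : (omega theta a b)^*%R = omega theta b a.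
Proof. by rewrite conj_expi /omega (thetaN b a) mulrN opprK. Qed.

Lemma omega_mul_tr (a b : 'I_n) : omega theta a b * omega theta b a = 1.
Proof. by rewrite -expiD (thetaN b a) mulrN addNr expi0. Qed.

(* Evaluated at the final index, the coefficient of U_{s l, l} in U_{s k, k}
   U_{s l, l} is off by this phase, from the factor lambda = (l, k) alone. *)
Definition twist (s : 'S_n) (k l : 'I_n) : R[i] :=
  if (l < k)%N then omega theta (s l) (s k) * omega theta k l else 1.

Lemma twistE (s : 'S_n) (k l : 'I_n) : twist s k l =
  if (l < k)%N then ((omega theta (s l) (s k))^*%R * omega theta l k) ^ (-1) else 1.
Proof.
rewrite /twist exprN1; case: ifP => // _; apply/esym/mulr1_eq.
by rewrite omega_conj mulrACA !omega_mul_tr mulr1.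
Qed.

Lemma twist_swap (s : 'S_n) (k l : 'I_n) : k != l ->
  twist s k l = omega theta (s l) (s k) * omega theta k l * twist s l k.
Proof.
rewrite /twist; case: ltngtP => [kl|lk|/val_inj ->]; rewrite ?eqxx ?mulr1 //.
by rewrite mulrACA !omega_mul_tr mulr1.
Qed.

Lemma Uop_UopE (i j k l : 'I_n) (f : vec R n) (s : 'S_n) (w : Vn n) : k != l ->
  Uop theta i k (Uop theta j l f) (s, w) =
  if (s k == i) && (s l == j) then
    twist s k l * (Ucoef theta (s k) k s w * Ucoef theta (s l) l s w
                   * f (s, vshift k (vshift l w (-1)) (-1)))
  else 0.
Proof.
move=> kl; rewrite /= !Ucoef_vshift_diag Ucoef_vshift.
have [<-|_] := eqVneq (s k) i; last by [].
have [<-|_] := eqVneq (s l) j; last by rewrite mulr0.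
rewrite -twistE vshiftC /=.
move: (Ucoef theta (s k) k s w) (Ucoef theta (s l) l s w) (twist s k l) => A B T.
by rewrite [B * T]mulrC !mulrA [A * T]mulrC.
Qed.

Lemma Uop_commutation (i j k l : 'I_n) (f : vec R n) (x : Idx n) :
  Uop theta i k (Uop theta j l f) x
    + omega theta j i * Uop theta j k (Uop theta i l f) x
  = omega theta k l * Uop theta i l (Uop theta j k f) x
    + omega theta j i * omega theta k l * Uop theta j l (Uop theta i k f) x.
Proof.
have [<-|kl] := eqVneq k l; first by rewrite omega_diag mul1r mulr1.
case: x => s w; have lk : l != k by rewrite eq_sym.
rewrite !Uop_UopE // (vshiftC l k) (twist_swap s k l kl).
rewrite (andbC (s l == i)) (andbC (s l == j)).
move: (Ucoef theta (s k) k s w) (Ucoef theta (s l) l s w) (twist s l k) => A B T.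
rewrite [B * A]mulrC; move: (A * B * _) => C.
have skl : s k != s l by rewrite (inj_eq perm_inj).
case: andP => [[/eqP <- /eqP <-]|_].
  by rewrite (negbTE skl) !mulr0 addr0 add0r mulrA.
case: andP => [[/eqP <- /eqP <-]|_]; last by rewrite !mulr0 addr0.
by rewrite !mulr0 addr0 add0r !mulrA omega_mul_tr mul1r.
Qed.

End WeightedShifts.

Theorem proposition3p2 (R : realType) (n : nat) (theta : 'M[R]_n)
  (hn : (2 <= n)%N) (hskew : theta^T = - theta) :
  (* sanity: U_ik acts on the basis as described *)
  (forall (i k : 'I_n) (sigma : 'S_n) (v : Vn n),
      Uop theta i k (eps R (sigma, v)) =
      if sigma k == i then
        (fun y => Ucoef theta i k sigma v * eps R (sigma, vshift k v 1) y)
      else (fun _ => 0)) /\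
  (* sanity: Ustar i k is the adjoint of U_ik (matrix coefficients) *)
  (forall (i k : 'I_n) (x y : Idx n),
      Uop theta i k (eps R x) y = (Ustar theta i k (eps R y) x)^*) /\
  (* the relations *)
  (forall (i j k l : 'I_n) (f : vec R n) (x : Idx n),
      Uop theta i k (Uop theta j l f) x
        + omega theta j i * Uop theta j k (Uop theta i l f) x
      = omega theta k l * Uop theta i l (Uop theta j k f) x
        + omega theta j i * omega theta k l * Uop theta j l (Uop theta i k f) x) /\
  (forall (k l : 'I_n) (f : vec R n) (x : Idx n),
      \sum_(i < n) Uop theta i k (Ustar theta i l f) x = kron R k l * f x) /\
  (forall (k l : 'I_n) (f : vec R n) (x : Idx n),
      \sum_(i < n) Ustar theta i l (Uop theta i k f) x = kron R k l * f x) /\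
  (forall (i j k : 'I_n) (f : vec R n) (x : Idx n), i != j ->
      Uop theta j k (Ustar theta i k f) x = 0) /\
  (forall (i j k : 'I_n) (f : vec R n) (x : Idx n), i != j ->
      Ustar theta i k (Uop theta j k f) x = 0).
Proof.
(* The relations hold for every n. *)
split; first exact: Uop_eps.
split; first exact: Uop_eps_adjoint.
split; first exact: Uop_commutation.
split; first exact: sum_Uop_Ustar.
split; first exact: sum_Ustar_Uop.
by split; [exact: Uop_Ustar_eq0 | exact: Ustar_Uop_eq0].
Qed.
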